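(* For a generic real $6\times 6$ skew-Hamiltonian matrix $A$ (i.e. for $A$ outside a proper algebraic subset of the space of skew-Hamiltonian matrices), the real vector space of homogeneous polynomials $H$ of degree $3$ in $x_1,\dots,x_6$ satisfying the system of second-order PDEs $A\,\nabla^2H(x)=\nabla^2H(x)\,A^{\rm T}$ (for all $x\in\mathbb R^6$) has dimension $12$.
   Context: $J=\begin{pmatrix}0&I_3\\-I_3&0\end{pmatrix}$. A real $6\times6$ matrix $A$ is skew-Hamiltonian if $A^{\rm T}J=JA$; such matrices form a 15-dimensional vector space. $\nabla^2 H$ denotes the Hesse matrix of $H$. *)

From HB Require Import structures.
From mathcomp Require Import all_boot all_order all_algebra.
Set Implicit Arguments. Unset Strict Implicit. Unset Printing Implicit Defensive.
Import Order.TTheory GRing.Theory Num.Theory.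
Local Open Scope ring_scope.

(* The symplectic matrix J = [[0, I_3], [-I_3, 0]] of size 6. *)
Definition Jmx (R : pzRingType) : 'M[R]_6 :=
  \matrix_(i < 6, j < 6)
    (if (i < 3)%N && (val j == (val i + 3)%N) then 1
     else if (3 <= i)%N && ((val j + 3)%N == val i) then -1 else 0).

Definition skew_hamiltonian (R : pzRingType) (A : 'M[R]_6) : Prop :=
  A^T *m Jmx R = Jmx R *m A.

(* Monomials in x_1..x_6 with each exponent <= 3 (enough for degree-3 forms):
   an exponent vector m, representing prod_i x_i^(m i). *)
Definition mon := {ffun 'I_6 -> 'I_4}.

(* Polynomials in x_1..x_6 whose partial degrees are <= 3, given by their
   coefficient function on monomials. *)
Definition poly6 (R : pzRingType) : lmodType R := {ffun mon -> R^o}.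

Definition mon_deg (m : mon) : nat := (\sum_(i < 6) (m i : nat))%N.

(* H is homogeneous of degree 3 (every polynomial that is homogeneous of
   degree 3 has all partial degrees <= 3, so is representable in poly6). *)
Definition homog3 (R : pzRingType) (H : poly6 R) : Prop :=
  forall m : mon, mon_deg m != 3%N -> H m = 0.

(* m + e_i (exponent of x_i raised by one; only used when m i < 3). *)
Definition mon_inc (m : mon) (i : 'I_6) : mon :=
  [ffun j => if j == i then inord (m i).+1 else m j].

Definition pderiv (R : pzRingType) (i : 'I_6) (H : poly6 R) : poly6 R :=
  [ffun m : mon => if ((m i : nat) < 3)%N
                   then H (mon_inc m i) *+ (m i).+1 else 0].

Definition peval (R : comPzRingType) (H : poly6 R) (x : 'I_6 -> R) : R :=
  \sum_(m : mon) H m * \prod_(i < 6) x i ^+ (m i).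

Definition hesse (R : comPzRingType) (H : poly6 R) (x : 'I_6 -> R) : 'M[R]_6 :=
  \matrix_(i < 6, j < 6) peval (pderiv i (pderiv j H)) x.

Definition sol_space (R : comPzRingType) (A : 'M[R]_6) (H : poly6 R) : Prop :=
  homog3 H /\ forall x : 'I_6 -> R, A *m hesse H x = hesse H x *m A^T.

Definition has_dim (R : pzRingType) (V : lmodType R) (S : V -> Prop) (d : nat) : Prop :=
  exists b : 'I_d -> V,
    (forall c : 'I_d -> R, \sum_(k < d) c k *: b k = 0 -> forall k, c k = 0) /\
    (forall v : V, S v <-> exists c : 'I_d -> R, v = \sum_(k < d) c k *: b k).

(* Polynomials in the 36 entries of a 6x6 matrix, as a finite list of terms
   (coefficient, exponent of each entry). *)
Definition mxpoly36 (R : pzRingType) := seq (R * ('I_6 -> 'I_6 -> nat)).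

Definition mxpeval (R : comPzRingType) (P : mxpoly36 R) (A : 'M[R]_6) : R :=
  \sum_(t <- P) t.1 * \prod_(i < 6) \prod_(j < 6) A i j ^+ (t.2 i j).

From HB Require Import structures.
From mathcomp Require Import all_boot all_order all_algebra all_fingroup ring zify.
Set Implicit Arguments. Unset Strict Implicit. Unset Printing Implicit Defensive.
Import Order.TTheory GRing.Theory Num.Theory.
Local Open Scope ring_scope.

(* The system only involves the symmetric tensor T = (d_i d_j d_k H) of the
   cubic H: it says that B = A^T can be moved between the first two slots of
   the trilinear form T(u, v, w).  As A is skew-Hamiltonian, B is also
   self-adjoint for the symplectic form omega(x, y) = x^T J y, so that
   omega(x, B^n x) = 0.  For generic A the Krylov vectors B^i e_1, B^i e_6
   (i < 3) form a basis and the Hankel matrix (omega(e_1, B^(i+j) e_6))_ij is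
   invertible; pairing the expansions of B^3 e_1 and B^3 e_6 with omega then
   shows that both Krylov chains obey the same recurrence
   B^3 f = c_0 f + c_1 B f + c_2 B^2 f.  Hence T is determined by the numbers
   T(B^N f_a, f_b, f_c), which are symmetric in the seeds a, b, c and satisfy
   the recurrence in N, i.e. by the 4 * 3 = 12 values with N < 3, and every
   choice of these values is realised.  Genericity is the non-vanishing of
   det(Krylov) * det(Hankel), which holds at an explicit nilpotent A. *)

Definition symmetric3 (T A : Type) (F : T -> T -> T -> A) : Prop :=
  forall i j k, F i j k = F j i k /\ F i j k = F i k j.

Lemma perm_eql_swap (T : eqType) (x y : T) s : perm_eql [:: x, y & s] [:: y, x & s].
Proof. exact: perm_catCA [:: x] [:: y] s. Qed.

Lemma perm_eq2 (T : eqType) (a b i j : T) :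
  perm_eq [:: a; b] [:: i; j] -> (a = i /\ b = j) \/ (a = j /\ b = i).
Proof.
move=> pe; have : a \in [:: i; j] by rewrite -(perm_mem pe) mem_head.
have single (x y : T) : perm_eq [:: x] [:: y] -> x = y.
  by move=> /perm_mem/(_ x); rewrite !mem_seq1 eqxx => /esym/eqP.
rewrite !inE => /orP[] /eqP Ea; [left | right]; split=> //; apply: single.
  by move: pe; rewrite Ea perm_cons.
by move: pe; rewrite Ea perm_sym perm_eql_swap perm_cons perm_sym.
Qed.

Lemma symmetric3_perm (T : eqType) (A : Type) (F : T -> T -> T -> A) a b c i j k :
  symmetric3 F -> perm_eq [:: a; b; c] [:: i; j; k] -> F a b c = F i j k.
Proof.
move=> sF pe; have s12 x y z := proj1 (sF x y z); have s23 x y z := proj2 (sF x y z).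
have head_eq x y z u v : perm_eq [:: x; y; z] [:: x; u; v] -> F x y z = F x u v.
  by rewrite perm_cons => /perm_eq2 [[-> ->] | [-> ->]].
have : i \in [:: a; b; c] by rewrite (perm_mem pe) mem_head.
rewrite !inE => /or3P [] /eqP Ei; rewrite -{}Ei in pe *.
- exact: head_eq.
- by rewrite s12; apply: head_eq; rewrite perm_eql_swap.
- rewrite s23 s12; apply: head_eq.
  by apply: perm_trans pe; rewrite perm_eql_swap perm_cons perm_eql_swap.
Qed.

Definition mon0 : mon := [ffun => ord0].
Definition mon1 (k : 'I_6) : mon := mon_inc mon0 k.
Definition mon3 (i j k : 'I_6) : mon := mon_inc (mon_inc (mon1 k) i) j.

Lemma mon_incE (m : mon) i j : (m i < 3)%N -> mon_inc m i j = (m j + (j == i))%N :> nat.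
Proof.
move=> lt_mi3; rewrite ffunE; case: eqP => [->|_]; last by rewrite addn0.
by rewrite addn1 inordK.
Qed.

Lemma mon0E j : mon0 j = 0%N :> nat.
Proof. by rewrite ffunE. Qed.

Lemma mon1E k l : mon1 k l = (l == k) :> nat.
Proof. by rewrite mon_incE ?mon0E. Qed.

Lemma mon1_lt3 k l : (mon1 k l < 3)%N.
Proof. by rewrite mon1E; case: (l == k). Qed.

Lemma mon2_lt3 k i l : (mon_inc (mon1 k) i l < 3)%N.
Proof. by rewrite mon_incE ?mon1_lt3 // mon1E; case: (l == k); case: (l == i). Qed.

Lemma mon3E i j k l : mon3 i j k l = count_mem l [:: i; j; k] :> nat.
Proof.
rewrite mon_incE ?mon2_lt3 // mon_incE ?mon1_lt3 // mon1E /= addn0.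
by rewrite (eq_sym i) (eq_sym j) (eq_sym k) addnAC addnC (addnC (l == k)).
Qed.

Lemma eq_mon3 a b c i j k :
  (mon3 a b c == mon3 i j k) = perm_eq [:: a; b; c] [:: i; j; k].
Proof.
apply/eqP/idP => [E | pe].
  apply/allP => l _; rewrite inE -(mon3E a b c) -(mon3E i j k).
  by rewrite E.
by apply/ffunP => l; apply: ord_inj; rewrite !mon3E; apply/seq.permP.
Qed.

Lemma mon3_sym : symmetric3 mon3.
Proof.
move=> i j k; split; apply/eqP; rewrite eq_mon3.
  by rewrite perm_eql_swap perm_refl.
by rewrite perm_cons perm_eql_swap perm_refl.
Qed.

Lemma mon_deg_inc (m : mon) i : (m i < 3)%N -> mon_deg (mon_inc m i) = (mon_deg m).+1.
Proof.
move=> lt_mi3; rewrite /mon_deg; under eq_bigr do rewrite mon_incE //.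
rewrite big_split /=.
have -> : (\sum_(l < 6) (l == i))%N = 1%N.
  by rewrite (bigD1 i) //= eqxx big1 // => l /negPf ->.
by rewrite addn1.
Qed.

Lemma mon_deg_eq0 (m : mon) : mon_deg m = 0%N -> m = mon0.
Proof.
move=> /eqP; rewrite /mon_deg sum_nat_eq0 => /forallP m0.
by apply/ffunP => l; apply: ord_inj; rewrite mon0E; apply/eqP/m0.
Qed.

Lemma mon_deg_mon1 k : mon_deg (mon1 k) = 1%N.
Proof.
rewrite mon_deg_inc ?mon0E // /mon_deg big1 // => l _.
by rewrite mon0E.
Qed.

Lemma mon_deg_mon3 i j k : mon_deg (mon3 i j k) = 3%N.
Proof. by rewrite /mon3 mon_deg_inc ?mon2_lt3 // mon_deg_inc ?mon1_lt3 // mon_deg_mon1. Qed.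

Lemma mon_deg_succ (m : mon) n : mon_deg m = n.+1 ->
  exists l (m' : mon), [/\ m = mon_inc m' l, mon_deg m' = n & (m' l < 3)%N].
Proof.
move=> deg_m; have [l m_l_gt0 | m_eq0] := pickP (fun l => 0 < m l)%N; last first.
  suff : mon_deg m = 0%N by rewrite deg_m.
  by rewrite /mon_deg big1 // => l _; have := m_eq0 l; rewrite lt0n => /negbFE/eqP.
pose m' : mon := [ffun j => if j == l then inord (m l).-1 else m j].
have m'_l : m' l = (m l).-1 :> nat.
  by rewrite ffunE eqxx inordK // (leq_ltn_trans (leq_pred _)).
have lt_m'l3 : (m' l < 3)%N by rewrite m'_l -ltnS prednK.
have Em : m = mon_inc m' l.
  apply/ffunP => j; apply: ord_inj; rewrite mon_incE //.
  have [->|nj] := eqVneq j l; first by rewrite m'_l addn1 prednK.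
  by rewrite addn0 ffunE (negPf nj).
exists l, m'; split=> //.
by move: deg_m; rewrite Em mon_deg_inc // => -[].
Qed.

Lemma mon_deg1P (m : mon) : mon_deg m = 1%N -> exists l, m = mon1 l.
Proof. by move=> /mon_deg_succ [l [m' [-> /mon_deg_eq0 -> _]]]; exists l. Qed.

Lemma mon_deg3P (m : mon) : mon_deg m = 3%N -> exists i j k, m = mon3 i j k.
Proof.
move=> /mon_deg_succ [j [m2 [-> /mon_deg_succ [i [m1 [-> deg_m1]] _]]]].
by have [k [m0 [-> /mon_deg_eq0 -> _]]] := mon_deg_succ deg_m1; exists i, j, k.
Qed.

Lemma mon1_inj : injective mon1.
Proof.
move=> a b /(congr1 (fun m : mon => m a : nat)).
by rewrite !mon1E eqxx; case: eqP.
Qed.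

(* The multinomial factor prod_l (m_l)! of the monomial x_i x_j x_k. *)
Definition mult3 (i j k : 'I_6) : nat := ((j == k) + (j == i)).+1 * (i == k).+1.

Lemma mult3_sym : symmetric3 mult3.
Proof.
move=> i j k; rewrite /mult3.
case: (i =P j) => [<- | /eqP ij].
  by case: (i =P k) => [<- | /eqP ik]; rewrite ?eqxx // (eq_sym k) (negPf ik).
case: (i =P k) => [<- | /eqP ik]; first by rewrite eqxx (eq_sym j) (negPf ij).
case: (j =P k) => [<- | /eqP jk]; first by rewrite eqxx (eq_sym j) (negPf ij).
by rewrite (eq_sym j) (eq_sym k i) (eq_sym k j) (negPf ij) (negPf ik) (negPf jk).
Qed.

Section Trilinear.
Variable R : fieldType.
Notation cV := 'cV[R]_6.
Notation tensor := ('I_6 -> 'I_6 -> 'I_6 -> R).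

Definition slice (T : tensor) (l : 'I_6) : 'M[R]_6 := \matrix_(i, j) T i j l.

Definition tform (T : tensor) (u v w : cV) : R :=
  \sum_i \sum_j \sum_k T i j k * (u i 0 * v j 0 * w k 0).

Definition trilinear (F : cV -> cV -> cV -> R) := [/\
  forall n (a : 'I_n -> R) x v w, F (\sum_l a l *: x l) v w = \sum_l a l * F (x l) v w,
  forall n (a : 'I_n -> R) x u w, F u (\sum_l a l *: x l) w = \sum_l a l * F u (x l) w &
  forall n (a : 'I_n -> R) x u v, F u v (\sum_l a l *: x l) = \sum_l a l * F u v (x l)].

Lemma sum_coord_lincomb n (a : 'I_n -> R) (x : 'I_n -> cV) (c : 'I_6 -> R) :
  \sum_i (\sum_l a l *: x l) i 0 * c i = \sum_l a l * \sum_i x l i 0 * c i.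
Proof.
under eq_bigr do rewrite summxE big_distrl /=.
rewrite exchange_big /=; apply: eq_bigr => l _; rewrite mulr_sumr.
by apply: eq_bigr => i _; rewrite mxE mulrA.
Qed.

Lemma tformE1 T u v w :
  tform T u v w = \sum_i u i 0 * \sum_j \sum_k T i j k * (v j 0 * w k 0).
Proof.
apply: eq_bigr => i _; rewrite mulr_sumr; apply: eq_bigr => j _; rewrite mulr_sumr.
by apply: eq_bigr => k _; ring.
Qed.

Lemma tformE2 T u v w :
  tform T u v w = \sum_j v j 0 * \sum_i \sum_k T i j k * (u i 0 * w k 0).
Proof.
rewrite /tform exchange_big; apply: eq_bigr => j _; rewrite mulr_sumr.
apply: eq_bigr => i _; rewrite mulr_sumr; apply: eq_bigr => k _; ring.
Qed.

Lemma tformE3 T u v w :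
  tform T u v w = \sum_k w k 0 * \sum_i \sum_j T i j k * (u i 0 * v j 0).
Proof.
rewrite /tform; under eq_bigr do rewrite exchange_big.
rewrite exchange_big; apply: eq_bigr => k _; rewrite mulr_sumr; apply: eq_bigr => i _.
rewrite mulr_sumr; apply: eq_bigr => j _; ring.
Qed.

Lemma tform_trilinear T : trilinear (tform T).
Proof.
split=> n a x v w.
- by rewrite tformE1 sum_coord_lincomb; apply: eq_bigr => l _; rewrite tformE1.
- by rewrite tformE2 sum_coord_lincomb; apply: eq_bigr => l _; rewrite tformE2.
- by rewrite tformE3 sum_coord_lincomb; apply: eq_bigr => l _; rewrite tformE3.
Qed.

Lemma tform_lincomb n (c : 'I_n -> R) (T : 'I_n -> tensor) u v w :
  tform (fun i j k => \sum_l c l * T l i j k) u v w = \sum_l c l * tform (T l) u v w.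
Proof.
rewrite /tform; under eq_bigr do under eq_bigr do under eq_bigr do rewrite big_distrl /=.
under [RHS]eq_bigr do rewrite mulr_sumr.
rewrite [RHS]exchange_big; apply: eq_bigr => i _; under [RHS]eq_bigr do rewrite mulr_sumr.
rewrite [RHS]exchange_big; apply: eq_bigr => j _; under [RHS]eq_bigr do rewrite mulr_sumr.
rewrite [RHS]exchange_big; apply: eq_bigr => k _.
by apply: eq_bigr => l _; rewrite -mulrA.
Qed.

Lemma eq_tform (T T' : tensor) :
  (forall i j k, T i j k = T' i j k) -> forall u v w, tform T u v w = tform T' u v w.
Proof.
move=> TT' u v w; apply: eq_bigr => i _; apply: eq_bigr => j _; apply: eq_bigr => k _.
by rewrite TT'.
Qed.

Lemma tform_sym T : symmetric3 T -> symmetric3 (tform T).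
Proof.
move=> symT u v w; split.
  rewrite /tform [RHS]exchange_big; apply: eq_bigr => i _; apply: eq_bigr => j _.
  by apply: eq_bigr => k _; rewrite (proj1 (symT i j k)); ring.
rewrite /tform; apply: eq_bigr => i _; rewrite [RHS]exchange_big; apply: eq_bigr => j _.
by apply: eq_bigr => k _; rewrite (proj2 (symT i j k)); ring.
Qed.

Definition unitv (a : 'I_6) : cV := delta_mx a 0.

Lemma sum_unitv (a : 'I_6) (c : 'I_6 -> R) : \sum_i unitv a i 0 * c i = c a.
Proof.
rewrite (bigD1 a) //= big1 => [|i /negPf ni]; last by rewrite mxE ni mul0r.
by rewrite mxE !eqxx mul1r addr0.
Qed.

Lemma tform_unitv T a b c : tform T (unitv a) (unitv b) (unitv c) = T a b c.
Proof.
rewrite tformE1 sum_unitv.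
transitivity (\sum_j unitv b j 0 * \sum_k unitv c k 0 * T a j k).
  by apply: eq_bigr => j _; rewrite mulr_sumr; apply: eq_bigr => k _; ring.
by rewrite sum_unitv sum_unitv.
Qed.

Lemma mulmx_lincomb (M : 'M[R]_6) n (a : 'I_n -> R) (x : 'I_n -> cV) :
  M *m (\sum_l a l *: x l) = \sum_l a l *: (M *m x l).
Proof. by rewrite mulmx_sumr; apply: eq_bigr => l _; rewrite scalemxAr. Qed.

Lemma trilinear_comp F (M1 M2 M3 : 'M[R]_6) : trilinear F ->
  trilinear (fun u v w => F (M1 *m u) (M2 *m v) (M3 *m w)).
Proof.
by case=> lin1 lin2 lin3; split=> n a x v w; rewrite mulmx_lincomb ?lin1 ?lin2 ?lin3.
Qed.

Lemma mulmx_colsum (W : 'M[R]_6) (y : cV) : W *m y = \sum_p y p 0 *: col p W.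
Proof.
apply/matrixP => i j; rewrite (ord1 j) summxE !mxE; apply: eq_bigr => p _.
by rewrite !mxE mulrC.
Qed.

Lemma trilinear_unitmx_eq F G (W : 'M[R]_6) : trilinear F -> trilinear G -> W \in unitmx ->
  (forall p q r, F (col p W) (col q W) (col r W) = G (col p W) (col q W) (col r W)) ->
  forall u v w, F u v w = G u v w.
Proof.
case=> F1 F2 F3 [G1 G2 G3] unitW FG u v w.
rewrite -(mulKVmx unitW u) -(mulKVmx unitW v) -(mulKVmx unitW w) !(mulmx_colsum W).
rewrite F1 G1; apply: eq_bigr => p _; rewrite F2 G2; congr (_ * _).
apply: eq_bigr => q _; rewrite F3 G3; congr (_ * _).
by apply: eq_bigr => r _; rewrite FG.
Qed.

Lemma tensor_unitmx_eq T T' (W : 'M[R]_6) : W \in unitmx ->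
  (forall p q r, tform T (col p W) (col q W) (col r W) = tform T' (col p W) (col q W) (col r W)) ->
  forall i j k, T i j k = T' i j k.
Proof.
move=> unitW TT' i j k; rewrite -tform_unitv -[RHS]tform_unitv.
exact: trilinear_unitmx_eq (tform_trilinear T) (tform_trilinear T') unitW TT' _ _ _.
Qed.

Definition pull (V : 'M[R]_6) (T : tensor) : tensor :=
  fun i j k => tform T (col i V) (col j V) (col k V).

Lemma pull_sym V T : symmetric3 T -> symmetric3 (pull V T).
Proof. by move=> symT i j k; apply: tform_sym. Qed.

Lemma tform_pull V T u v w : tform (pull V T) u v w = tform T (V *m u) (V *m v) (V *m w).
Proof.
apply: (trilinear_unitmx_eq (tform_trilinear _) (trilinear_comp V V V (tform_trilinear T))
  (unitmx1 _ _)) => p q r.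
by rewrite !col1 tform_unitv -!colE.
Qed.

Definition movable (B : 'M[R]_6) (T : tensor) :=
  forall u v w, tform T (B *m u) v w = tform T u (B *m v) w.

Definition bform (M : 'M[R]_6) (x y : cV) : R := (x^T *m M *m y) 0 0.

Lemma tform_bform T u v w : tform T u v w = \sum_k w k 0 * bform (slice T k) u v.
Proof.
rewrite tformE3; apply: eq_bigr => k _; congr (_ * _).
rewrite /bform mxE; under [RHS]eq_bigr do rewrite mxE big_distrl /=.
rewrite [RHS]exchange_big; apply: eq_bigr => i _; apply: eq_bigr => j _.
by rewrite !mxE; ring.
Qed.

Lemma bform_unitv M i j : bform M (unitv i) (unitv j) = M i j.
Proof. by rewrite /bform /unitv trmx_delta -rowE -colE !mxE. Qed.

Lemma bform_mull (A M : 'M[R]_6) x y : bform (A *m M) x y = bform M (A^T *m x) y.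
Proof. by rewrite /bform trmx_mul trmxK !mulmxA. Qed.

Lemma bform_mulr (A M : 'M[R]_6) x y : bform (M *m A^T) x y = bform M x (A^T *m y).
Proof. by rewrite /bform !mulmxA. Qed.

Lemma movable_slice (A : 'M[R]_6) T :
  movable A^T T <-> forall l, A *m slice T l = slice T l *m A^T.
Proof.
split=> [movT l | slT u v w].
  apply/matrixP => i j; rewrite -!bform_unitv bform_mull bform_mulr.
  have tform_l x y : bform (slice T l) x y = tform T x y (unitv l).
    by rewrite tform_bform sum_unitv.
  by rewrite !tform_l movT.
by rewrite !tform_bform; apply: eq_bigr => k _; rewrite -bform_mull slT bform_mulr.
Qed.

End Trilinear.

Section CubicTensor.
Variable R : numFieldType.
Notation tensor := ('I_6 -> 'I_6 -> 'I_6 -> R).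

Definition deriv3 (H : poly6 R) : tensor := fun i j k => pderiv i (pderiv j H) (mon1 k).

Lemma deriv3E H i j k : deriv3 H i j k = H (mon3 i j k) *+ mult3 i j k.
Proof.
rewrite /deriv3 ffunE mon1_lt3 ffunE mon2_lt3 -mulrnA.
by rewrite mon_incE ?mon1_lt3 // !mon1E.
Qed.

Lemma deriv3_sym H : symmetric3 (deriv3 H).
Proof.
move=> i j k; rewrite !deriv3E.
by case: (mon3_sym i j k) => <- <-; case: (mult3_sym i j k) => <- <-.
Qed.

Lemma deriv3_lincomb n (c : 'I_n -> R) (H : 'I_n -> poly6 R) i j k :
  deriv3 (\sum_l c l *: H l) i j k = \sum_l c l * deriv3 (H l) i j k.
Proof.
rewrite deriv3E sum_ffunE -sumrMnl; apply: eq_bigr => l _.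
by rewrite deriv3E !ffunE mulrnAr.
Qed.

Lemma homog3_lincomb n (c : 'I_n -> R) (H : 'I_n -> poly6 R) :
  (forall l, homog3 (H l)) -> homog3 (\sum_l c l *: H l).
Proof.
move=> hH m deg_m; rewrite sum_ffunE big1 // => l _.
by rewrite !ffunE hH // scaler0.
Qed.

Lemma deriv3_inj (H G : poly6 R) : homog3 H -> homog3 G ->
  (forall i j k, deriv3 H i j k = deriv3 G i j k) -> H = G.
Proof.
move=> hH hG eqHG; apply/ffunP => m.
have [/mon_deg3P [i [j [k ->]]] | deg_m] := eqVneq (mon_deg m) 3%N; last by rewrite hH ?hG.
move/eqP: (eqHG i j k); rewrite !deriv3E -subr_eq0 -mulrnBl mulrn_eq0.
by rewrite /mult3 muln_eq0 /= subr_eq0 => /eqP.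
Qed.

Lemma pderiv2_eq0 (H : poly6 R) i j m : homog3 H -> mon_deg m != 1%N ->
  pderiv i (pderiv j H) m = 0.
Proof.
move=> hH deg_m; rewrite ffunE; case: ifP => // lt_mi3; rewrite ffunE.
case: ifP => lt_mij3; last by rewrite mul0rn.
by rewrite hH ?mul0rn // !mon_deg_inc.
Qed.

Lemma peval_linear (G : poly6 R) x : (forall m, mon_deg m != 1%N -> G m = 0) ->
  peval G x = \sum_l G (mon1 l) * x l.
Proof.
move=> hG; rewrite /peval (bigID (fun m => mon_deg m == 1%N)) /= addrC big1 ?add0r; last first.
  by move=> m /hG ->; rewrite mul0r.
rewrite (reindex_onto mon1 (fun m => odflt ord0 [pick l | m == mon1 l])); last first.
  by move=> m /eqP/mon_deg1P [l ->]; case: pickP => [l' /eqP <- // | /(_ l)]; rewrite eqxx.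
apply: eq_big => [l | l _].
  rewrite mon_deg_mon1 eqxx /=; case: pickP => [l' /eqP /mon1_inj -> | /(_ l)]; rewrite ?eqxx //.
congr (_ * _); rewrite (bigD1 l) //= mon1E eqxx expr1 big1 ?mulr1 // => i /negPf ni.
by rewrite mon1E ni expr0.
Qed.

Lemma hesse_deriv3 (H : poly6 R) x : homog3 H -> hesse H x = \sum_l x l *: slice (deriv3 H) l.
Proof.
move=> hH; apply/matrixP => i j; rewrite mxE peval_linear; last first.
  by move=> m; apply: pderiv2_eq0.
by rewrite summxE; apply: eq_bigr => l _; rewrite !mxE mulrC.
Qed.

Lemma sol_spaceE (A : 'M[R]_6) (H : poly6 R) : sol_space A H <->
  homog3 H /\ forall l, A *m slice (deriv3 H) l = slice (deriv3 H) l *m A^T.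
Proof.
split=> [[hH solH] | [hH slH]]; split=> //; [move=> l | move=> x].
  have := solH (fun l' => (l' == l)%:R); rewrite hesse_deriv3 //.
  rewrite (bigD1 l) //= eqxx scale1r big1 ?addr0 // => l' /negPf ->.
  by rewrite scale0r.
rewrite hesse_deriv3 // mulmx_sumr mulmx_suml; apply: eq_bigr => l _.
by rewrite -scalemxAr -scalemxAl slH.
Qed.

(* Any index triple representing the monomial will do, T being symmetric. *)
Definition tensor_cubic (T : tensor) : poly6 R :=
  [ffun m => if [pick t | mon3 t.1.1 t.1.2 t.2 == m] is Some (i, j, k)
             then T i j k / (mult3 i j k)%:R else 0].

Lemma homog3_tensor_cubic T : homog3 (tensor_cubic T).
Proof.
move=> m deg_m; rewrite ffunE; case: pickP => // -[[i j] k] /eqP Em.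
by move: deg_m; rewrite -Em mon_deg_mon3.
Qed.

Lemma deriv3_tensor_cubic T : symmetric3 T ->
  forall i j k, deriv3 (tensor_cubic T) i j k = T i j k.
Proof.
move=> symT a b c; rewrite deriv3E ffunE; case: pickP => [[[i j] k] | /(_ (a, b, c))].
  rewrite /= eq_mon3 => pe.
  rewrite (symmetric3_perm mult3_sym pe) (symmetric3_perm symT pe).
  rewrite -(mulr_natr (T a b c / _)).
  by rewrite divfK // pnatr_eq0 /mult3 muln_eq0.
by rewrite eqxx.
Qed.

End CubicTensor.

Lemma adjoint_exp (R : pzRingType) (P : 'cV[R]_6 -> 'cV[R]_6 -> R) (B : 'M[R]_6) :
  (forall x y, P (B *m x) y = P x (B *m y)) ->
  forall n x y, P (B ^+ n *m x) y = P x (B ^+ n *m y).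
Proof.
move=> adjB; elim=> [|n IHn] x y; first by rewrite !expr0 !mul1mx.
have expSr z : B ^+ n.+1 *m z = B ^+ n *m (B *m z) by rewrite exprSr mulmxA.
have expS z : B ^+ n.+1 *m z = B *m (B ^+ n *m z) by rewrite exprS mulmxA.
by rewrite expSr IHn adjB -expS.
Qed.

Lemma sum_ord3 (V : nmodType) (F : 'I_3 -> V) :
  \sum_(m < 3) F m = F ord0 + F (inord 1) + F (inord 2).
Proof.
rewrite !big_ord_recl big_ord0 addr0 addrA.
by congr (F _ + F _ + F _); apply: val_inj; rewrite /= inordK.
Qed.

Section KrylovTensors.
Variable R : fieldType.
Notation cV := 'cV[R]_6.
Notation tensor := ('I_6 -> 'I_6 -> 'I_6 -> R).
Variable B : 'M[R]_6.

(* The two Krylov chains start at e_1 and e_6 (indices 0 and 5). *)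
Definition seed_idx (a : bool) : 'I_6 := if a then @Ordinal 6 5 isT else ord0.
Definition seed (a : bool) : cV := unitv R (seed_idx a).
Definition krylov (a : bool) (i : nat) : cV := B ^+ i *m seed a.
Definition krylov_mx : 'M[R]_6 := \matrix_(i, p) krylov (3 <= p)%N (p %% 3) i 0.

Lemma col_krylov_mx p : col p krylov_mx = krylov (3 <= p)%N (p %% 3).
Proof. by apply/matrixP => i j; rewrite (ord1 j) !mxE. Qed.

Lemma krylov_mxE i p : krylov_mx i p = (B ^+ (p %% 3)) i (seed_idx (3 <= p)%N).
Proof. by rewrite mxE /krylov /seed /unitv -colE mxE. Qed.

Lemma mulmx_krylov n a i : B ^+ n *m krylov a i = krylov a (n + i).
Proof. by rewrite /krylov exprD mulmxA. Qed.

Lemma movable_exp T : movable B T ->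
  forall n u v w, tform T (B ^+ n *m u) v w = tform T u (B ^+ n *m v) w.
Proof. by move=> movT n u v w; apply: (adjoint_exp (P := fun u v => tform T u v w)). Qed.

Lemma tform_krylov T : symmetric3 T -> movable B T -> forall a b c i j l,
  tform T (krylov a i) (krylov b j) (krylov c l) =
  tform T (krylov a (i + j + l)) (seed b) (seed c).
Proof.
move=> symT movT a b c i j l; have s23 u v w := proj2 (tform_sym symT u v w).
rewrite [krylov b j]/krylov [krylov c l]/krylov.
rewrite -(movable_exp movT) s23 -(movable_exp movT) s23.
by rewrite !mulmx_krylov addnC (addnC j).
Qed.

Definition kval T a b c N := tform T (krylov a N) (seed b) (seed c).

Lemma kval_sym T N : symmetric3 T -> movable B T ->
  symmetric3 (fun a b c => kval T a b c N).
Proof.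
move=> symT movT a b c; have [s12 s23] := tform_sym symT (krylov a N) (seed b) (seed c).
split=> //.
by rewrite /kval s12 /krylov (movable_exp movT).
Qed.

Lemma kval_canonical T a b c N : symmetric3 T -> movable B T ->
  kval T a b c N = kval T (3 <= a + b + c)%N (2 <= a + b + c)%N (1 <= a + b + c)%N N.
Proof.
move=> symT movT; apply: (symmetric3_perm (kval_sym N symT movT)).
by case: a; case: b; case: c.
Qed.

(* With k = 3 s + n: s of the three seeds are e_6 and n < 3 is the power of B. *)
Definition kcoord T (k : 'I_12) : R :=
  kval T (3 <= k %/ 3)%N (2 <= k %/ 3)%N (1 <= k %/ 3)%N (k %% 3).

Lemma kcoordE T s n (lt_n3 : (n < 3)%N) (lt_s4 : (s < 4)%N) :
  kcoord T (@Ordinal 12 (s * 3 + n) ltac:(lia)) = kval T (3 <= s)%N (2 <= s)%N (1 <= s)%N n.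
Proof. by rewrite /kcoord /= divnMDl // divn_small // addn0 modnMDl modn_small. Qed.

Variable cf : 'I_3 -> R.
Hypothesis krylov_rec : forall a, krylov a 3 = \sum_m cf m *: krylov a m.

Lemma krylov_shift a N : krylov a (N + 3) = \sum_m cf m *: krylov a (N + m).
Proof.
rewrite -mulmx_krylov krylov_rec mulmx_lincomb.
by apply: eq_bigr => m _; rewrite mulmx_krylov.
Qed.

Lemma kval_shift T a b c N : kval T a b c (N + 3) = \sum_m cf m * kval T a b c (N + m).
Proof. by rewrite /kval krylov_shift; case: (tform_trilinear T) => ->. Qed.

Lemma kval_eq T T' : symmetric3 T -> symmetric3 T' -> movable B T -> movable B T' ->
  (forall k, kcoord T k = kcoord T' k) -> forall N a b c, kval T a b c N = kval T' a b c N.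
Proof.
move=> symT symT' movT movT' eq_coord; elim/ltn_ind=> N IH a b c.
have [lt_N3 | le3N] := ltnP N 3; last first.
  rewrite -(subnK le3N) !kval_shift; apply: eq_bigr => m _; rewrite IH //.
  by rewrite -{2}(subnK le3N) ltn_add2l.
rewrite kval_canonical // [RHS]kval_canonical //.
have lt_s4 : (a + b + c < 4)%N by case: a; case: b; case: c.
by rewrite -!(kcoordE _ lt_N3 lt_s4) eq_coord.
Qed.

Hypothesis unitW : krylov_mx \in unitmx.

Lemma krylov_tensor_eq T T' :
  symmetric3 T -> symmetric3 T' -> movable B T -> movable B T' ->
  (forall k, kcoord T k = kcoord T' k) -> forall i j k, T i j k = T' i j k.
Proof.
move=> symT symT' movT movT' eq_coord; apply: (tensor_unitmx_eq unitW) => p q r.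
by rewrite !col_krylov_mx !tform_krylov //; apply: kval_eq.
Qed.

Fixpoint recseq (n N : nat) : R :=
  match N with
  | (((M.+1 as M1).+1) as M2).+1 =>
      cf ord0 * recseq n M + cf (inord 1) * recseq n M1 + cf (inord 2) * recseq n M2
  | _ => (N == n)%:R
  end.

Lemma recseq_small n N : (N < 3)%N -> recseq n N = (N == n)%:R.
Proof. by case: N => [|[|[|]]]. Qed.

Lemma recseq_shift n N : recseq n (N + 3) = \sum_m cf m * recseq n (N + m).
Proof.
by rewrite sum_ord3 /= !inordK // addn0 addn1 addn2 addn3.
Qed.

(* In Krylov coordinates: the index p stands for B^(p %% 3) applied to seed (3 <= p). *)
Definition kbasis_coord (s n : nat) (p q r : 'I_6) : R :=
  (((3 <= p) + (3 <= q) + (3 <= r))%N == s)%:R * recseq n (p %% 3 + q %% 3 + r %% 3)%N.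

Definition kbasis (s n : nat) : tensor := pull (invmx krylov_mx) (kbasis_coord s n).

Lemma invmx_krylov a i : (i < 3)%N -> exists p : 'I_6,
  [/\ invmx krylov_mx *m krylov a i = unitv R p, (3 <= p)%N = a & (p %% 3 = i)%N].
Proof.
move=> lt_i3; have lt_p6 : (a * 3 + i < 6)%N by case: a; lia.
have [Ea Ei] : (3 <= a * 3 + i)%N = a /\ ((a * 3 + i) %% 3 = i)%N.
  by split; [case: (a); lia | rewrite modnMDl modn_small].
exists (Ordinal lt_p6); split=> //.
have -> : krylov a i = col (Ordinal lt_p6) krylov_mx by rewrite col_krylov_mx /= Ea Ei.
by rewrite colE mulmxA mulVmx // mul1mx.
Qed.

Lemma tform_kbasis s n a b c i j l : (i < 3)%N -> (j < 3)%N -> (l < 3)%N ->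
  tform (kbasis s n) (krylov a i) (krylov b j) (krylov c l) =
  ((a + b + c)%N == s)%:R * recseq n (i + j + l).
Proof.
move=> lt_i3 lt_j3 lt_l3; rewrite tform_pull.
have [p [-> <- <-]] := invmx_krylov a lt_i3.
have [q [-> <- <-]] := invmx_krylov b lt_j3.
by have [r [-> <- <-]] := invmx_krylov c lt_l3; rewrite tform_unitv.
Qed.

Lemma tform_kbasis_succ s n a b c i j l : (i < 3)%N -> (j < 3)%N -> (l < 3)%N ->
  tform (kbasis s n) (krylov a i.+1) (krylov b j) (krylov c l) =
  ((a + b + c)%N == s)%:R * recseq n (i + j + l).+1.
Proof.
move=> lt_i3 lt_j3 lt_l3; have [lt_i2 | le2i] := ltnP i 2; first by rewrite tform_kbasis.
have -> : i = 2%N by lia.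
rewrite krylov_rec; case: (tform_trilinear (kbasis s n)) => -> _ _.
rewrite (_ : (2 + j + l).+1 = j + l + 3)%N; last by lia.
rewrite recseq_shift mulr_sumr; apply: eq_bigr => m _.
by rewrite tform_kbasis // mulrCA; congr (_ * (_ * recseq n _)); lia.
Qed.

Lemma kbasis_coord_sym s n : symmetric3 (kbasis_coord s n).
Proof.
move=> p q r; rewrite /kbasis_coord; split.
  by rewrite (addnC (3 <= p)%N) (addnC (p %% 3)%N).
by rewrite -!addnA (addnC (3 <= q)%N) (addnC (q %% 3)%N).
Qed.

Lemma kbasis_sym s n : symmetric3 (kbasis s n).
Proof. exact/pull_sym/kbasis_coord_sym. Qed.

Lemma kbasis_movable s n : movable B (kbasis s n).
Proof.
move=> u v w; set T := kbasis s n.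
have := trilinear_unitmx_eq (trilinear_comp B 1%:M 1%:M (tform_trilinear T))
  (trilinear_comp 1%:M B 1%:M (tform_trilinear T)) unitW _ u v w.
rewrite !mul1mx; apply=> p q r /=; rewrite !mul1mx !col_krylov_mx.
have mulB a i : B *m krylov a i = krylov a i.+1 by rewrite -[B in B *m _]expr1 mulmx_krylov.
have lt_mod3 (x : 'I_6) : (x %% 3 < 3)%N by rewrite ltn_mod.
rewrite !mulB tform_kbasis_succ // (proj1 (tform_sym (kbasis_sym s n) _ _ _)).
by rewrite tform_kbasis_succ // (addnC (3 <= p)%N) (addnC (p %% 3)%N).
Qed.

Definition kcomb (x : 'I_12 -> R) : tensor :=
  fun i j k => \sum_l x l * kbasis (l %/ 3) (l %% 3) i j k.

Lemma kcomb_sym x : symmetric3 (kcomb x).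
Proof.
move=> i j k; split; apply: eq_bigr => l _; congr (_ * _).
  exact: (proj1 (kbasis_sym _ _ i j k)).
exact: (proj2 (kbasis_sym _ _ i j k)).
Qed.

Lemma kcomb_movable x : movable B (kcomb x).
Proof.
move=> u v w; rewrite !tform_lincomb; apply: eq_bigr => l _.
by rewrite kbasis_movable.
Qed.

Lemma kcoord_kbasis (k k' : 'I_12) :
  kcoord (kbasis (k %/ 3) (k %% 3)) k' = (k' == k)%:R.
Proof.
have lt_s4 : (k' %/ 3 < 4)%N by rewrite ltn_divLR.
have lt_n3 : (k' %% 3 < 3)%N by rewrite ltn_mod.
have krylov0 a : krylov a 0 = seed a by rewrite /krylov expr0 mul1mx.
rewrite /kcoord /kval -!krylov0 tform_kbasis // !addn0 recseq_small //.
have -> : ((3 <= k' %/ 3) + (2 <= k' %/ 3) + (1 <= k' %/ 3))%N = (k' %/ 3)%N.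
  by move: lt_s4; case: (k' %/ 3)%N => [|[|[|[|]]]].
have -> : (k' == k) = (k' %/ 3 == k %/ 3)%N && (k' %% 3 == k %% 3)%N.
  apply/eqP/andP => [-> // | [/eqP divE /eqP modE]].
  by apply: val_inj; rewrite /= (divn_eq k' 3) (divn_eq k 3) divE modE.
by rewrite -natrM; case: eqP; case: eqP.
Qed.

Lemma kcoord_kcomb x k : kcoord (kcomb x) k = x k.
Proof.
rewrite /kcoord /kval tform_lincomb (bigD1 k) //= big1 => [|l /negPf nl].
  by rewrite -[tform _ _ _ _]/(kcoord _ k) kcoord_kbasis eqxx mulr1 addr0.
by rewrite -[tform _ _ _ _]/(kcoord _ k) kcoord_kbasis eq_sym nl mulr0.
Qed.

Lemma kcomb_kcoord T : symmetric3 T -> movable B T ->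
  forall i j k, T i j k = kcomb (kcoord T) i j k.
Proof.
move=> symT movT; apply: krylov_tensor_eq => //; first exact: kcomb_sym.
  exact: kcomb_movable.
by move=> k; rewrite kcoord_kcomb.
Qed.

End KrylovTensors.

Ltac entrywise :=
  let i := fresh "i" in let j := fresh "j" in
  apply/matrixP => i j; rewrite !mxE ?big_ord_recr ?big_ord0 /= ?mxE;
  case: i => [[|[|[|[|[|[|//]]]]]] ?]; case: j => [[|[|[|[|[|[|//]]]]]] ?] /=;
  rewrite ?mulr0 ?mul0r ?mulr1 ?mul1r ?add0r ?addr0 ?mulrN ?mulNr ?opprK ?oppr0.

Lemma Jmx_sqr (R : pzRingType) : Jmx R *m Jmx R = - 1%:M.
Proof. by entrywise. Qed.

Lemma trmx_Jmx (R : pzRingType) : (Jmx R)^T = - Jmx R.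
Proof. by entrywise. Qed.

Section SkewHamiltonian.
Variable R : numFieldType.
Notation cV := 'cV[R]_6.
Notation J := (Jmx R).
Variable A : 'M[R]_6.
Hypothesis skewA : skew_hamiltonian A.

Lemma mulmx_Jmx : A *m J = J *m A^T.
Proof.
have := congr1 (fun M => J *m M *m J) skewA.
rewrite /= !mulmxA -[in LHS]mulmxA !Jmx_sqr !mulNmx !mulmxN !mul1mx !mulmx1.
by move/oppr_inj ->.
Qed.

Definition omega (x y : cV) : R := bform J x y.

Lemma omega_adjoint x y : omega (A^T *m x) y = omega x (A^T *m y).
Proof. by rewrite /omega -bform_mull mulmx_Jmx bform_mulr. Qed.

Lemma omegaC x y : omega x y = - omega y x.
Proof.
have trmx11 (M : 'M[R]_1) : M 0 0 = M^T 0 0 by rewrite mxE.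
rewrite /omega /bform trmx11 !trmx_mul trmxK trmx_Jmx mulNmx mulmxN mxE.
by rewrite mulmxA.
Qed.

Lemma omega_exp_self n x : omega x (A^T ^+ n *m x) = 0.
Proof.
have : omega x (A^T ^+ n *m x) *+ 2 = 0.
  by rewrite mulr2n {2}omegaC -(adjoint_exp omega_adjoint) subrr.
by move/eqP; rewrite mulrn_eq0 => /eqP.
Qed.

Lemma omegaDr x y z : omega x (y + z) = omega x y + omega x z.
Proof. by rewrite /omega /bform mulmxDr mxE. Qed.

Lemma omega_lincomb n (a : 'I_n -> R) (y : 'I_n -> cV) x :
  omega x (\sum_l a l *: y l) = \sum_l a l * omega x (y l).
Proof.
rewrite /omega /bform mulmx_sumr summxE; apply: eq_bigr => l _.
by rewrite -scalemxAr mxE.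
Qed.

Notation krylovA := (krylov A^T).

Lemma omega_krylov a b i j :
  omega (krylovA a i) (krylovA b j) = omega (seed R a) (krylovA b (i + j)).
Proof. by rewrite /krylov (adjoint_exp omega_adjoint) mulmx_krylov. Qed.

Definition hankel N := omega (seed R false) (krylovA true N).
Definition hankel_mx : 'M[R]_3 := \matrix_(i, j) hankel (i + j).

Lemma hankel_mxE i j :
  hankel_mx i j = (A^T ^+ (i + j)) (@Ordinal 6 3 isT) (seed_idx true).
Proof.
rewrite mxE /hankel /omega /bform /seed /unitv trmx_delta -rowE mxE.
rewrite (bigD1 (@Ordinal 6 3 isT)) //= big1 => [|l]; last first.
  by rewrite !mxE; case: l => [[|[|[|[|[|[|//]]]]]] ?] //= _; rewrite mul0r.
by rewrite !mxE mul1r addr0; under eq_bigr do rewrite mulrC; rewrite sum_unitv.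
Qed.

Lemma hankel_inj (z z' : 'I_3 -> R) : hankel_mx \in unitmx ->
  (forall j : 'I_3, \sum_m z m * hankel (j + m) = \sum_m z' m * hankel (j + m)) ->
  forall m, z m = z' m.
Proof.
move=> unitH eq_z m; pose col_of (y : 'I_3 -> R) : 'cV[R]_3 := \col_m y m.
suff /(congr1 (mulmx (invmx hankel_mx))) : hankel_mx *m col_of z = hankel_mx *m col_of z'.
  by rewrite !mulKmx // => /matrixP/(_ m 0); rewrite !mxE.
apply/matrixP => j k; rewrite !mxE.
under eq_bigr do rewrite !mxE mulrC; under [RHS]eq_bigr do rewrite !mxE mulrC.
exact: eq_z.
Qed.

Lemma omega_krylov_same a i j : omega (krylovA a i) (krylovA a j) = 0.
Proof. by rewrite omega_krylov omega_exp_self. Qed.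

Lemma omega_krylovFT i j : omega (krylovA false i) (krylovA true j) = hankel (i + j).
Proof. by rewrite omega_krylov. Qed.

Lemma omega_krylovTF i j : omega (krylovA true i) (krylovA false j) = - hankel (i + j).
Proof. by rewrite omegaC omega_krylovFT addnC. Qed.

Lemma krylov_coord y : krylov_mx A^T \in unitmx -> exists dF dT : 'I_3 -> R,
  y = \sum_m dF m *: krylovA false m + \sum_m dT m *: krylovA true m.
Proof.
move=> unitW; pose d := invmx (krylov_mx A^T) *m y.
exists (fun m : 'I_3 => d (lshift 3 m) 0), (fun m : 'I_3 => d (rshift 3 m) 0).
rewrite -{1}(mulKVmx unitW y) mulmx_colsum (big_split_ord _ (m := 3) (n := 3)) /=.
congr (_ + _); apply: eq_bigr => m _; rewrite col_krylov_mx; congr (_ *: krylov _ _ _).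
- by apply/negbTE; rewrite -ltnNge /= ltn_ord.
- by rewrite /= modn_small.
- by rewrite /= modnDl modn_small.
Qed.

Lemma krylov_recurrence_exists : krylov_mx A^T \in unitmx -> hankel_mx \in unitmx ->
  exists c : 'I_3 -> R, forall a, krylovA a 3 = \sum_m c m *: krylovA a m.
Proof.
move=> unitW unitH.
have [dF [eF eqF]] := krylov_coord (krylovA false 3) unitW.
have [dT [eT eqT]] := krylov_coord (krylovA true 3) unitW.
have sum_same a j (d : 'I_3 -> R) : \sum_m d m * omega (krylovA a j) (krylovA a m) = 0.
  by rewrite big1 // => m _; rewrite omega_krylov_same mulr0.
have eF0 : forall m, eF m = 0.
  apply: (hankel_inj (z' := fun=> 0)) => // j /=.
  under [RHS]eq_bigr do rewrite mul0r; rewrite big1_eq.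
  transitivity (omega (krylovA false j) (krylovA false 3)); last exact: omega_krylov_same.
  rewrite eqF omegaDr !omega_lincomb sum_same add0r.
  by apply: eq_bigr => m _; rewrite omega_krylovFT.
have dT0 : forall m, dT m = 0.
  apply: (hankel_inj (z' := fun=> 0)) => // j /=.
  under [RHS]eq_bigr do rewrite mul0r; rewrite big1_eq.
  apply/eqP; rewrite -oppr_eq0; apply/eqP.
  transitivity (omega (krylovA true j) (krylovA true 3)); last exact: omega_krylov_same.
  rewrite eqT omegaDr !omega_lincomb sum_same addr0 -sumrN.
  by apply: eq_bigr => m _; rewrite omega_krylovTF mulrN.
have dF_eT : forall m, dF m = eT m.
  apply: hankel_inj => // j.
  transitivity (omega (krylovA false 3) (krylovA true j)).
    rewrite omegaC eqF omegaDr !omega_lincomb sum_same addr0 -sumrN.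
    by apply: eq_bigr => m _; rewrite omega_krylovTF mulrN opprK addnC.
  rewrite omega_krylovFT addnC -omega_krylovFT eqT omegaDr !omega_lincomb.
  rewrite big1 ?add0r => [|m _]; last by rewrite dT0 mul0r.
  by apply: eq_bigr => m _; rewrite omega_krylovFT.
exists dF => -[].
  rewrite eqT big1 ?add0r => [|m _]; last by rewrite dT0 scale0r.
  by apply: eq_bigr => m _; rewrite dF_eT.
by rewrite eqF [X in _ + X]big1 ?addr0 // => m _; rewrite eF0 scale0r.
Qed.

End SkewHamiltonian.

Section MatrixPolynomials.
Variable R : comNzRingType.
Notation mxp := (mxpoly36 R).

Definition mxp_const (c : R) : mxp := [:: (c, fun _ _ => 0%N)].
Definition mxp_var (a b : 'I_6) : mxp := [:: (1, fun i j => ((i == a) && (j == b) : nat))].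
Definition mxp_mul (p q : mxp) : mxp :=
  [seq (x.1 * y.1, fun i j => (x.2 i j + y.2 i j)%N) | x <- p, y <- q].
Definition mxp_sum (I : finType) (f : I -> mxp) : mxp := \big[cat/[::]]_(i : I) f i.
Definition mxp_prod (I : finType) (f : I -> mxp) : mxp := \big[mxp_mul/mxp_const 1]_(i : I) f i.

Lemma mxpeval_const c A : mxpeval (mxp_const c) A = c.
Proof.
rewrite /mxpeval big_seq1 /= big1 ?mulr1 // => i _.
by rewrite big1 // => j _; rewrite expr0.
Qed.

Lemma mxpeval_var a b A : mxpeval (mxp_var a b) A = A a b.
Proof.
rewrite /mxpeval big_seq1 /= mul1r (bigD1 a) //= [X in _ * X]big1 ?mulr1; last first.
  by move=> i /negPf ni; rewrite big1 // => j _; rewrite ni expr0.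
rewrite (bigD1 b) //= !eqxx expr1 big1 ?mulr1 // => j /negPf nj.
by rewrite nj andbF expr0.
Qed.

Lemma mxpeval_mul p q A : mxpeval (mxp_mul p q) A = mxpeval p A * mxpeval q A.
Proof.
rewrite /mxpeval big_allpairs_dep mulr_suml; apply: eq_bigr => x _.
rewrite mulr_sumr; apply: eq_bigr => y _ /=.
under eq_bigr do under eq_bigr do rewrite exprD.
under eq_bigr do rewrite big_split /=.
by rewrite big_split /=; ring.
Qed.

Lemma mxpeval_sum (I : finType) (f : I -> mxp) A :
  mxpeval (mxp_sum f) A = \sum_i mxpeval (f i) A.
Proof.
apply: (big_morph (fun p => mxpeval p A)) => [p q|]; last by rewrite /mxpeval big_nil.
by rewrite /mxpeval big_cat.
Qed.

Lemma mxpeval_prod (I : finType) (f : I -> mxp) A :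
  mxpeval (mxp_prod f) A = \prod_i mxpeval (f i) A.
Proof. by apply: (big_morph (fun p => mxpeval p A)) => [p q|]; rewrite ?mxpeval_mul ?mxpeval_const. Qed.

Fixpoint mxp_trexp (N : nat) (i j : 'I_6) : mxp :=
  if N is N'.+1 then mxp_sum (fun l : 'I_6 => mxp_mul (mxp_trexp N' i l) (mxp_var j l))
  else mxp_const (i == j)%:R.

Lemma mxpeval_trexp N i j A : mxpeval (mxp_trexp N i j) A = (A^T ^+ N) i j.
Proof.
elim: N i j => [|N IHN] i j /=; first by rewrite mxpeval_const expr0 mxE.
rewrite mxpeval_sum exprSr mxE; apply: eq_bigr => l _.
by rewrite mxpeval_mul IHN mxpeval_var mxE.
Qed.

Definition mxp_det n (M : 'I_n -> 'I_n -> mxp) : mxp :=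
  mxp_sum (fun s : 'S_n => mxp_mul (mxp_const ((-1) ^+ s)) (mxp_prod (fun i => M i (s i)))).

Lemma mxpeval_det n (M : 'I_n -> 'I_n -> mxp) A :
  mxpeval (mxp_det M) A = \det (\matrix_(i, j) mxpeval (M i j) A).
Proof.
rewrite mxpeval_sum; apply: eq_bigr => s _.
rewrite mxpeval_mul mxpeval_const mxpeval_prod; congr (_ * _).
by apply: eq_bigr => i _; rewrite mxE.
Qed.

End MatrixPolynomials.

Definition generic_poly (R : numFieldType) : mxpoly36 R :=
  mxp_mul (mxp_det (fun i p : 'I_6 => mxp_trexp R (p %% 3)%N i (seed_idx (3 <= p)%N)))
          (mxp_det (fun i j : 'I_3 => mxp_trexp R (i + j) (@Ordinal 6 3 isT) (seed_idx true))).

Lemma mxpeval_generic_poly (R : numFieldType) (A : 'M[R]_6) :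
  mxpeval (generic_poly R) A = \det (krylov_mx A^T) * \det (hankel_mx A).
Proof.
have -> : krylov_mx A^T =
    \matrix_(i, p) mxpeval (mxp_trexp R (p %% 3)%N i (seed_idx (3 <= p)%N)) A.
  by apply/matrixP => i p; rewrite [RHS]mxE mxpeval_trexp krylov_mxE.
have -> : hankel_mx A =
    \matrix_(i, j) mxpeval (mxp_trexp R (i + j) (@Ordinal 6 3 isT) (seed_idx true)) A.
  by apply/matrixP => i j; rewrite [RHS]mxE mxpeval_trexp hankel_mxE.
by rewrite mxpeval_mul !mxpeval_det.
Qed.

Section Witness.
Variable R : numFieldType.

(* The witness is A = B0^T: B0 maps e_1 -> e_2 -> e_3 -> 0 and e_6 -> e_5 -> e_4 -> 0,
   so its Krylov matrix is a permutation matrix. *)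
Definition B0 : 'M[R]_6 := \matrix_(i, j)
  ([|| (i == 1 :> nat) && (j == 0 :> nat), (i == 2 :> nat) && (j == 1 :> nat),
       (i == 3 :> nat) && (j == 4 :> nat) | (i == 4 :> nat) && (j == 5 :> nat)] : nat)%:R.

Definition B0_sqr_mx : 'M[R]_6 := \matrix_(i, j)
  ([|| (i == 2 :> nat) && (j == 0 :> nat) | (i == 3 :> nat) && (j == 5 :> nat)] : nat)%:R.

Lemma B0_sqr : B0 ^+ 2 = B0_sqr_mx.
Proof. by rewrite expr2; entrywise. Qed.

Lemma B0_cube : B0 ^+ 3 = 0.
Proof. by rewrite exprSr B0_sqr; entrywise. Qed.

Lemma skew_hamiltonian_B0 : skew_hamiltonian B0^T.
Proof. by rewrite /skew_hamiltonian trmxK; entrywise. Qed.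

Definition swap35_mx : 'M[R]_6 := \matrix_(i, p)
  (i == (if p == 3 :> nat then 5 else if p == 5 :> nat then 3 else p) :> nat)%:R.

Definition antidiag3_mx : 'M[R]_3 := \matrix_(i, j) (i + j == 2)%:R.

Lemma krylov_mx_B0 : krylov_mx B0 = swap35_mx.
Proof.
apply/matrixP => i p; rewrite krylov_mxE [RHS]mxE.
case: p => [[|[|[|[|[|[|//]]]]]] ?] /=; rewrite ?expr0 ?expr1 ?B0_sqr !mxE;
  by case: i => [[|[|[|[|[|[|//]]]]]] ?].
Qed.

Lemma hankel_mx_B0 : hankel_mx B0^T = antidiag3_mx.
Proof.
have B0_exp4 : B0 ^+ 4 = 0 by rewrite exprSr B0_cube mul0r.
apply/matrixP => i j; rewrite hankel_mxE trmxK [RHS]mxE.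
case: i => [[|[|[|//]]] ?]; case: j => [[|[|[|//]]] ?] /=;
  by rewrite ?expr0 ?expr1 ?B0_sqr ?B0_cube ?B0_exp4 !mxE.
Qed.

Lemma swap35_mx_invol : swap35_mx *m swap35_mx = 1%:M.
Proof. by entrywise. Qed.

Lemma antidiag3_mx_invol : antidiag3_mx *m antidiag3_mx = 1%:M.
Proof.
apply/matrixP => i j; rewrite !mxE !big_ord_recr big_ord0 /= !mxE.
case: i => [[|[|[|//]]] ?]; case: j => [[|[|[|//]]] ?] /=;
  by rewrite ?mulr0 ?mul0r ?mulr1 ?mul1r ?add0r ?addr0.
Qed.

End Witness.

Lemma det_involution_neq0 (F : fieldType) n (X : 'M[F]_n) : X *m X = 1%:M -> \det X != 0.
Proof. by move=> /mulmx1_unit [unitX _]; rewrite -unitfE -unitmxE. Qed.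

Section SolutionSpace.
Variable R : numFieldType.
Variable A : 'M[R]_6.
Variable cf : 'I_3 -> R.
Hypothesis krylov_rec : forall a, krylov A^T a 3 = \sum_m cf m *: krylov A^T a m.
Hypothesis unitW : krylov_mx A^T \in unitmx.

Definition sol_basis (k : 'I_12) : poly6 R := tensor_cubic (kbasis A^T cf (k %/ 3) (k %% 3)).

Lemma deriv3_sol_comb x i j k :
  deriv3 (\sum_l x l *: sol_basis l) i j k = kcomb A^T cf x i j k.
Proof.
rewrite deriv3_lincomb; apply: eq_bigr => l _.
by rewrite deriv3_tensor_cubic //; apply: kbasis_sym.
Qed.

Lemma homog3_sol_comb x : homog3 (\sum_l x l *: sol_basis l).
Proof. by apply: homog3_lincomb => l; apply: homog3_tensor_cubic. Qed.

Lemma sol_space_dim12 : has_dim (sol_space A) 12.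
Proof.
exists sol_basis; split=> [x comb0 k | v].
  have kcomb0 i j l : kcomb A^T cf x i j l = 0.
    by rewrite -deriv3_sol_comb comb0 deriv3E ffunE mul0rn.
  rewrite -(kcoord_kcomb cf unitW x k) /kcoord /kval /tform big1 // => i _.
  by rewrite big1 // => j _; rewrite big1 // => l _; rewrite kcomb0 mul0r.
rewrite sol_spaceE; split=> [[homv /movable_slice movv] | [x ->]].
  exists (kcoord A^T (deriv3 v)); apply: deriv3_inj => // [|i j k].
    exact: homog3_sol_comb.
  by rewrite deriv3_sol_comb -kcomb_kcoord //; apply: deriv3_sym.
split; first exact: homog3_sol_comb.
apply/movable_slice => u w y; rewrite !(eq_tform (deriv3_sol_comb x)).
exact: kcomb_movable.
Qed.

End SolutionSpace.

Theorem mainTheorem2 (R : realFieldType) :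
  exists P : mxpoly36 R,
    (exists A0 : 'M[R]_6, skew_hamiltonian A0 /\ mxpeval P A0 != 0) /\
    (forall A : 'M[R]_6, skew_hamiltonian A -> mxpeval P A != 0 ->
       has_dim (V := poly6 R) (sol_space A) 12).
Proof.
exists (generic_poly R); split.
  exists (B0 R)^T; split; first exact: skew_hamiltonian_B0.
  rewrite mxpeval_generic_poly trmxK krylov_mx_B0 hankel_mx_B0 mulf_neq0 //.
    exact/det_involution_neq0/swap35_mx_invol.
  exact/det_involution_neq0/antidiag3_mx_invol.
move=> A skewA; rewrite mxpeval_generic_poly mulf_eq0 negb_or => /andP[detW detH].
have unitW : krylov_mx A^T \in unitmx by rewrite unitmxE unitfE.
have unitH : hankel_mx A \in unitmx by rewrite unitmxE unitfE.
have [cf krylov_rec] := krylov_recurrence_exists skewA unitW unitH.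
exact: sol_space_dim12 krylov_rec unitW.
Qed.
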